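(* Let $n\ge2$ and let $\rho=p_0|0^n\rangle\langle0^n|+\sum_{i,j=1}^nB_{ij}|e_i\rangle\langle e_j|$ be an $n$-qubit density operator, where $B$ is a real symmetric positive semidefinite $n\times n$ matrix and $p_0+\mathrm{Tr}B=1$. Then $\rho\in\mathcal S$ if and only if $B_{ii}\ge\sum_{j\ne i}|B_{ij}|$ for every $i=1,\dots,n$.
   Context: $|e_i\rangle$ denotes the computational-basis state with a $1$ on qubit $i$ and $0$ elsewhere. $\mathcal S$ is the $n$-qubit stabilizer polytope, the convex hull of the density matrices of pure stabilizer states $C|0^n\rangle$, $C$ an $n$-qubit Clifford unitary. *)

From HB Require Import structures.
From mathcomp Require Import all_boot all_order all_algebra.
From mathcomp Require Import algC.
Set Implicit Arguments. Unset Strict Implicit. Unset Printing Implicit Defensive.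
Import Order.TTheory GRing.Theory Num.Theory.
Local Open Scope ring_scope.

Definition adj (m k : nat) (A : 'M[algC]_(m, k)) : 'M[algC]_(k, m) :=
  (map_mx Num.conj A)^T.

Definition hermitian (m : nat) (A : 'M[algC]_m) : Prop := adj A = A.

Definition psd (m : nat) (A : 'M[algC]_m) : Prop :=
  hermitian A /\ forall v : 'cV[algC]_m, 0 <= (adj v *m A *m v) 0 0.

Definition density (m : nat) (A : 'M[algC]_m) : Prop :=
  psd A /\ \tr A = 1.

Definition unitary (m : nat) (U : 'M[algC]_m) : Prop := U *m adj U = 1%:M.

(* value of qubit q in the computational basis index k *)
Definition bit (q k : nat) : bool := odd (k %/ 2 ^ q).

(* single-qubit Paulis I, X, Y, Z (codes 0,1,2,3); entry (r, c) *)
Definition pauli1 (a : 'I_4) (r c : bool) : algC :=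
  match val a with
  | 0 => if r == c then 1 else 0
  | 1 => if r == c then 0 else 1
  | 2 => if r == c then 0 else (if c then - 'i else 'i)
  | _ => if r == c then (if r then -1 else 1) else 0
  end.

Definition pauli (n : nat) (p : 'I_n -> 'I_4) : 'M[algC]_(2 ^ n) :=
  \matrix_(r, c) \prod_(q < n) pauli1 (p q) (bit q r) (bit q c).

(* Clifford unitaries: unitaries normalizing the Pauli group
   { c P : c in {1,-1,i,-i}, P Pauli string } *)
Definition clifford (n : nat) (U : 'M[algC]_(2 ^ n)) : Prop :=
  unitary U /\
  forall (c : algC) (p : 'I_n -> 'I_4), c ^+ 4 = 1 ->
    exists (c' : algC) (p' : 'I_n -> 'I_4),
      c' ^+ 4 = 1 /\ U *m (c *: pauli p) *m adj U = c' *: pauli p'.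

Definition ket (n : nat) (k : 'I_(2 ^ n)) : 'cV[algC]_(2 ^ n) :=
  \col_r (if r == k then 1 else 0).

Lemma zero_lt_exp2 (n : nat) : (0 < 2 ^ n)%N.
Proof. by rewrite expn_gt0. Qed.

Definition ket0 (n : nat) : 'cV[algC]_(2 ^ n) := ket (Ordinal (zero_lt_exp2 n)).

(* |e_i> : qubit i is 1, others 0, i.e. basis index 2^i *)
Lemma exp2_lt (n : nat) (i : 'I_n) : (2 ^ i < 2 ^ n)%N.
Proof. by rewrite ltn_exp2l. Qed.

Definition ket_e (n : nat) (i : 'I_n) : 'cV[algC]_(2 ^ n) :=
  ket (Ordinal (exp2_lt i)).

Definition stab_state (n : nat) (C : 'M[algC]_(2 ^ n)) : 'M[algC]_(2 ^ n) :=
  (C *m ket0 n) *m adj (C *m ket0 n).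

Definition in_stab_polytope (n : nat) (rho : 'M[algC]_(2 ^ n)) : Prop :=
  exists (m : nat) (w : 'I_m -> algC) (C : 'I_m -> 'M[algC]_(2 ^ n)),
    (forall k, 0 <= w k) /\ \sum_(k < m) w k = 1 /\
    (forall k, clifford (C k)) /\
    rho = \sum_(k < m) w k *: stab_state (C k).

Definition rho_of (n : nat) (p0 : algC) (B : 'M[algC]_n) : 'M[algC]_(2 ^ n) :=
  p0 *: (ket0 n *m adj (ket0 n)) +
  \sum_(i < n) \sum_(j < n) B i j *: (ket_e i *m adj (ket_e j)).

(** Sufficiency: ρ is the convex combination
    p0 |0⟩⟨0| + Σ_a (B_aa − Σ_{b≠a} |B_ab|) |e_a⟩⟨e_a| + Σ_{a≠b} |B_ab| |φ_ab⟩⟨φ_ab|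
    with φ_ab = (|e_a⟩ + sgn(B_ab) |e_b⟩)/√2, and each of these states is C|0^n⟩ for
    a Clifford C: the identity, X_a, and (X_a + s Z_a X_b)/√2, a normalised sum of two
    anticommuting Pauli strings.  The weights are nonnegative by diagonal dominance and
    because p0 = ⟨0|ρ|0⟩ ≥ 0.

    Necessity: for each i the linear functional
      L_i(M) = M_{e_i e_i} − Σ_{j≠i} s_j Re M_{e_i e_j} + ½ Σ_{j≠i} Σ_{k∉{i,j}} M_{t t},
    t = e_i + e_j + e_k, s_j = sgn B_ij, equals B_ii − Σ_{j≠i} |B_ij| on ρ and is
    nonnegative on every stabilizer state ψ.  Indeed |ψ⟩⟨ψ| is the average of the Pauli
    operators C Z_S C† stabilizing ψ, so whenever ψ_x, ψ_y ≠ 0 some stabilizer flips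
    exactly the bits of x ⊕ y, whence |ψ_z| = |ψ_{z⊕x⊕y}| for all z.  With N = |ψ_{e_i}|²
    and m the number of j ≠ i with ψ_{e_j} ≠ 0 this gives
    L_i(ψ) ≥ N − mN + N m(m−1)/2 = N (m−1)(m−2)/2 ≥ 0. *)

From HB Require Import structures.
From mathcomp Require Import all_boot all_order all_algebra.
From mathcomp Require Import algC.
From mathcomp Require Import zify ring.
Import Order.TTheory GRing.Theory Num.Theory.
Local Open Scope ring_scope.
Set Implicit Arguments. Unset Strict Implicit. Unset Printing Implicit Defensive.

(** * Binary expansion of basis indices *)

Lemma bitS q k : bit q.+1 k = bit q k./2.
Proof. by rewrite /bit expnS divnMA divn2. Qed.

Lemma bit_zero q : bit q 0 = false.
Proof. by rewrite /bit div0n. Qed.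

Lemma bit_exp2 q i : bit q (2 ^ i) = (q == i).
Proof.
rewrite /bit; case: (ltngtP q i) => [lt_qi|lt_iq|->].
- rewrite -(subnK (ltnW lt_qi)) expnD mulnK ?expn_gt0 // oddX orbF.
  by rewrite subn_eq0 leqNgt lt_qi.
- by rewrite divn_small ?ltn_exp2l.
- by rewrite divnn expn_gt0.
Qed.

Lemma bit_inj n a b : (a < 2 ^ n)%N -> (b < 2 ^ n)%N ->
  (forall q, (q < n)%N -> bit q a = bit q b) -> a = b.
Proof.
elim: n a b => [|n IHn] a b.
  by rewrite expn0 !ltnS !leqn0 => /eqP -> /eqP ->.
rewrite expnS => lt_a lt_b eq_ab.
have odd_ab : odd a = odd b by have := eq_ab 0%N isT; rewrite /bit !divn1.
have half_ab : a./2 = b./2.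
  apply: IHn => [||q lt_qn]; last by rewrite -!bitS; apply: eq_ab.
    by rewrite -divn2 ltn_divLR // mulnC.
  by rewrite -divn2 ltn_divLR // mulnC.
by rewrite -(odd_double_half a) -(odd_double_half b) odd_ab half_ab.
Qed.

Fixpoint nat_of_bits (f : nat -> bool) (n : nat) : nat :=
  if n is n'.+1 then f 0%N + (nat_of_bits (fun q => f q.+1) n').*2 else 0.

Lemma nat_of_bits_lt f n : (nat_of_bits f n < 2 ^ n)%N.
Proof.
elim: n f => [|n IHn] f //=.
rewrite expnS mul2n; have := IHn (fun q => f q.+1).
by case: (f 0%N) => /=; rewrite -!muln2; lia.
Qed.

Lemma bit_nat_of_bits f n q : (q < n)%N -> bit q (nat_of_bits f n) = f q.
Proof.
elim: n f q => [|n IHn] f [|q] //= lt_qn.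
  by rewrite /bit divn1 oddD odd_double addbF; case: (f 0%N).
rewrite bitS (_ : _./2 = nat_of_bits (fun q => f q.+1) n) ?IHn //.
by rewrite halfD odd_double andbF doubleK; case: (f 0%N).
Qed.

Definition ord_of_bits n (b : 'I_n -> bool) : 'I_(2 ^ n) :=
  Ordinal (nat_of_bits_lt (fun q => if insub q is Some q' then b q' else false) n).

Definition idx0 n : 'I_(2 ^ n) := Ordinal (zero_lt_exp2 n).
Definition idx1 n (i : 'I_n) : 'I_(2 ^ n) := Ordinal (exp2_lt i).
Definition idx3 n (i j k : 'I_n) : 'I_(2 ^ n) :=
  ord_of_bits (fun q => [|| q == i, q == j | q == k]).

Lemma bit_ord_of_bits n (b : 'I_n -> bool) (q : 'I_n) : bit q (ord_of_bits b) = b q.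
Proof. by rewrite bit_nat_of_bits // valK. Qed.

Lemma bit_idx0 n (q : 'I_n) : bit q (idx0 n) = false.
Proof. exact: bit_zero. Qed.

Lemma bit_idx1 n (i q : 'I_n) : bit q (idx1 i) = (q == i).
Proof. exact: bit_exp2. Qed.

Lemma bit_idx3 n (i j k q : 'I_n) : bit q (idx3 i j k) = [|| q == i, q == j | q == k].
Proof. exact: bit_ord_of_bits. Qed.

Lemma eq_idx_bits n (r c : 'I_(2 ^ n)) :
  (r == c) = [forall q : 'I_n, bit q r == bit q c].
Proof.
apply/eqP/forallP => [-> //|eq_rc]; apply/val_inj/(bit_inj (ltn_ord r) (ltn_ord c)).
by move=> q lt_qn; apply/eqP: (eq_rc (Ordinal lt_qn)).
Qed.

Lemma eq_idx0_bits n (r : 'I_(2 ^ n)) : (r == idx0 n) = [forall q : 'I_n, ~~ bit q r].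
Proof. by rewrite eq_idx_bits; apply: eq_forallb => q; rewrite bit_idx0 eqbF_neg. Qed.

Lemma idx1_eq n (i j : 'I_n) : (idx1 i == idx1 j) = (i == j).
Proof.
apply/eqP/eqP => [/(congr1 val)/eqP|-> //].
by rewrite /= eqn_exp2l // => /eqP/val_inj.
Qed.

Lemma idx1_neq0 n (i : 'I_n) : (idx1 i == idx0 n) = false.
Proof.
by apply/negbTE; rewrite eq_idx0_bits negb_forall; apply/existsP; exists i; rewrite bit_idx1 eqxx.
Qed.

Lemma sum_idx_bits (V : nmodType) n (G : 'I_(2 ^ n) -> V) :
  \sum_(t < 2 ^ n) G t = \sum_(b : {ffun 'I_n -> bool}) G (ord_of_bits b).
Proof.
apply: (reindex (fun b : {ffun 'I_n -> bool} => ord_of_bits b)).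
exists (fun t : 'I_(2 ^ n) => [ffun q : 'I_n => bit q t]) => [b _|t _].
  by apply/ffunP => q; rewrite ffunE bit_ord_of_bits.
by apply/eqP; rewrite eq_idx_bits; apply/forallP => q; rewrite bit_ord_of_bits ffunE.
Qed.

(** * Tensor products of single-qubit matrices *)

Section TensorMx.
Variable R : comNzRingType.

Definition tensor_mx n (f : 'I_n -> bool -> bool -> R) : 'M[R]_(2 ^ n) :=
  \matrix_(r, c) \prod_(q < n) f q (bit q r) (bit q c).

Definition qmul (f g : bool -> bool -> R) (r c : bool) : R :=
  f r true * g true c + f r false * g false c.

Lemma eq_tensor_mx n (f g : 'I_n -> bool -> bool -> R) :
  (forall q r c, f q r c = g q r c) -> tensor_mx f = tensor_mx g.
Proof. by move=> eq_fg; apply/matrixP => r c; rewrite !mxE; apply: eq_bigr. Qed.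

Lemma tensor_mxM n (f g : 'I_n -> bool -> bool -> R) :
  tensor_mx f *m tensor_mx g = tensor_mx (fun q => qmul (f q) (g q)).
Proof.
apply/matrixP => r c; rewrite !mxE.
under eq_bigr do rewrite !mxE -big_split /=.
rewrite sum_idx_bits.
under eq_bigr do under eq_bigr do rewrite !bit_ord_of_bits.
rewrite -(bigA_distr_bigA (fun q (x : bool) => f q (bit q r) x * g q x (bit q c))) /=.
by apply: eq_bigr => q _; rewrite big_bool.
Qed.

Lemma tensor_mxZ n (a : 'I_n -> R) (f : 'I_n -> bool -> bool -> R) :
  tensor_mx (fun q r c => a q * f q r c) = (\prod_q a q) *: tensor_mx f.
Proof. by apply/matrixP => r c; rewrite !mxE big_split. Qed.

Lemma prodr_indicator (I : finType) (P : pred I) :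
  \prod_(q : I) ((P q)%:R : R) = [forall q, P q]%:R.
Proof.
have [/forallP allP | /forallPn [q nPq]] := boolP [forall q, P q].
  by rewrite big1 // => q _; rewrite allP.
by rewrite (bigD1 q) //= (negbTE nPq) mul0r.
Qed.

Lemma tensor_mx1 n : tensor_mx (fun (_ : 'I_n) (r c : bool) => (r == c)%:R) = 1%:M.
Proof. by apply/matrixP => r c; rewrite !mxE prodr_indicator eq_idx_bits. Qed.

End TensorMx.

Lemma adj_mulmx m k l (A : 'M[algC]_(m, k)) (B : 'M[algC]_(k, l)) :
  adj (A *m B) = adj B *m adj A.
Proof. by rewrite /adj map_mxM trmx_mul. Qed.

Lemma adj_add m k (A B : 'M[algC]_(m, k)) : adj (A + B) = adj A + adj B.
Proof. by rewrite /adj map_mxD raddfD. Qed.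

Lemma adj_scale m k (a : algC) (A : 'M[algC]_(m, k)) : adj (a *: A) = a^* *: adj A.
Proof. by apply/matrixP => i j; rewrite !mxE rmorphM. Qed.

Lemma adj_mx1 m : adj (1%:M : 'M[algC]_m) = 1%:M.
Proof. by rewrite /adj map_mx1 trmx1. Qed.

Lemma tensor_mx_adj n (f : 'I_n -> bool -> bool -> algC) :
  adj (tensor_mx f) = tensor_mx (fun q r c => (f q c r)^*).
Proof. by apply/matrixP => r c; rewrite !mxE rmorph_prod. Qed.

Lemma outer_mxE m (u v : 'cV[algC]_m) r c : (u *m adj v) r c = u r 0 * (v c 0)^*.
Proof. by rewrite mxE big_ord1 !mxE. Qed.

Lemma ketE n (k r : 'I_(2 ^ n)) c : ket k r c = (r == k)%:R.
Proof. by rewrite mxE; case: (r == k). Qed.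

Lemma tensor_mx_ket0 n (f : 'I_n -> bool -> bool -> algC) (r : 'I_(2 ^ n)) :
  (tensor_mx f *m ket0 n) r 0 = \prod_(q < n) f q (bit q r) false.
Proof.
rewrite mxE (bigD1 (idx0 n)) //= big1 => [|t /negbTE nt0]; last by rewrite ketE nt0 mulr0.
by rewrite ketE eqxx mulr1 addr0 mxE; apply: eq_bigr => q _; rewrite bit_idx0.
Qed.

Lemma quad_form_ket n (A : 'M[algC]_(2 ^ n)) (k : 'I_(2 ^ n)) :
  (adj (ket k) *m A *m ket k) 0 0 = A k k.
Proof.
rewrite mxE (bigD1 k) //= big1 ?addr0 => [|t /negbTE ntk]; last by rewrite ketE ntk mulr0.
rewrite ketE eqxx mulr1 mxE (bigD1 k) //= big1 ?addr0 => [|t /negbTE ntk].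
  by rewrite !mxE eqxx conjC1 mul1r.
by rewrite !mxE ntk conjC0 mul0r.
Qed.

(** * Pauli strings and Clifford unitaries *)

Lemma root4_sqr1 (x : algC) : x ^+ 2 = 1 -> x ^+ 4 = 1.
Proof. by move=> x2; rewrite (exprM _ 2 2) x2 expr1n. Qed.

Lemma root4M (x y : algC) : x ^+ 4 = 1 -> y ^+ 4 = 1 -> (x * y) ^+ 4 = 1.
Proof. by rewrite exprMn => -> ->; rewrite mulr1. Qed.

Lemma root4_1 : (1 : algC) ^+ 4 = 1. Proof. exact: expr1n. Qed.
Lemma root4_N1 : (-1 : algC) ^+ 4 = 1. Proof. by rewrite root4_sqr1 // sqrrN expr1n. Qed.
Lemma root4_i : 'i ^+ 4 = 1 :> algC. Proof. by rewrite (exprM _ 2 2) sqrCi sqrrN expr1n. Qed.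
Lemma root4_Ni : (- 'i) ^+ 4 = 1 :> algC. Proof. by rewrite -mulN1r (root4M root4_N1 root4_i). Qed.

Lemma root4_norm (x : algC) : x ^+ 4 = 1 -> `|x| = 1.
Proof. by move=> x4; apply/eqP; rewrite -(@pexpr_eq1 _ _ 4) // -normrX x4 normr1. Qed.

Lemma sqr_eq1_cases (x : algC) : x ^+ 2 = 1 -> x = 1 \/ x = -1.
Proof. by move/eqP; rewrite sqrf_eq1 => /orP[]/eqP->; [left|right]. Qed.

Definition sI : 'I_4 := Ordinal (isT : (0 < 4)%N).
Definition sX : 'I_4 := Ordinal (isT : (1 < 4)%N).
Definition sY : 'I_4 := Ordinal (isT : (2 < 4)%N).
Definition sZ : 'I_4 := Ordinal (isT : (3 < 4)%N).

Definition flips (a : 'I_4) : bool := (val a == 1%N) || (val a == 2%N).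

Ltac case_pauli1 a := case: a => [[|[|[|[|?]]]] ?] //.

Lemma mulCii : 'i * 'i = -1 :> algC.
Proof. by rewrite -expr2 sqrCi. Qed.

Ltac pauli1_simpl := rewrite /qmul /pauli1 /=
  ?(mulr0, mul0r, mulr1, mul1r, mulrN, mulNr, opprK, addr0, add0r, oppr0, mulCii).

Ltac pauli1_phase d := first
  [ exists 1, d; split; [exact: root4_1 | by case; case; pauli1_simpl]
  | exists (-1), d; split; [exact: root4_N1 | by case; case; pauli1_simpl]
  | exists 'i, d; split; [exact: root4_i | by case; case; pauli1_simpl]
  | exists (- 'i), d; split; [exact: root4_Ni | by case; case; pauli1_simpl] ].

Lemma pauli1_mul (a b : 'I_4) : exists (ph : algC) (d : 'I_4), ph ^+ 4 = 1 /\
  forall r c, qmul (pauli1 a) (pauli1 b) r c = ph * pauli1 d r c.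
Proof.
by case_pauli1 a; case_pauli1 b;
  first [pauli1_phase sI | pauli1_phase sX | pauli1_phase sY | pauli1_phase sZ].
Qed.

Lemma pauli1_comm (a b : 'I_4) : exists e : algC, e ^+ 2 = 1 /\
  forall r c, qmul (pauli1 a) (pauli1 b) r c = e * qmul (pauli1 b) (pauli1 a) r c.
Proof.
by case_pauli1 a; case_pauli1 b; first
  [ exists 1; split; [exact: expr1n | by case; case; pauli1_simpl]
  | exists (-1); split; [by rewrite sqrrN expr1n | by case; case; pauli1_simpl]].
Qed.

Lemma pauli1_sqr (a : 'I_4) r c : qmul (pauli1 a) (pauli1 a) r c = (r == c)%:R.
Proof. by case_pauli1 a; case: r; case: c; pauli1_simpl. Qed.

Lemma pauli1_adj (a : 'I_4) r c : (pauli1 a c r)^* = pauli1 a r c.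
Proof.
by case_pauli1 a; case: r; case: c;
  rewrite /pauli1 /= ?(rmorph0, rmorph1, conjCi) // rmorphN /= ?rmorph1 ?conjCi ?opprK.
Qed.

Lemma pauli1_neq0 (a : 'I_4) r c : (pauli1 a r c != 0) = (r (+) c == flips a).
Proof.
by case_pauli1 a; case: r; case: c;
  rewrite /pauli1 /flips /= ?oppr_eq0 ?neq0Ci ?oner_eq0 ?eqxx.
Qed.

Lemma norm_pauli1 (a : 'I_4) r c : pauli1 a r c != 0 -> `|pauli1 a r c| = 1.
Proof.
by case_pauli1 a; case: r; case: c; rewrite /pauli1 /= ?eqxx ?normrN ?normCi ?normr1.
Qed.

Lemma pauli1_ket0 (a : 'I_4) r : a != sY -> pauli1 a r false = (r == flips a)%:R.
Proof. by case_pauli1 a; case: r. Qed.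

Lemma pauliE n (p : 'I_n -> 'I_4) : pauli p = tensor_mx (fun q => pauli1 (p q)).
Proof. by []. Qed.

Lemma pauli_mul n (p p' : 'I_n -> 'I_4) : exists (ph : algC) (p'' : 'I_n -> 'I_4),
  ph ^+ 4 = 1 /\ pauli p *m pauli p' = ph *: pauli p''.
Proof.
have [ph /fin_all_exists [d phd]] := fin_all_exists (fun q => pauli1_mul (p q) (p' q)).
exists (\prod_q ph q), d; split.
  by rewrite -prodrXl big1 // => q _; case: (phd q).
by rewrite !pauliE tensor_mxM -tensor_mxZ; apply: eq_tensor_mx => q; case: (phd q).
Qed.

Lemma pauli_comm n (p p' : 'I_n -> 'I_4) : exists e : algC,
  e ^+ 2 = 1 /\ pauli p *m pauli p' = e *: (pauli p' *m pauli p).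
Proof.
have [e comm] := fin_all_exists (fun q => pauli1_comm (p q) (p' q)).
exists (\prod_q e q); split.
  by rewrite -prodrXl big1 // => q _; case: (comm q).
by rewrite !pauliE !tensor_mxM -tensor_mxZ; apply: eq_tensor_mx => q; case: (comm q).
Qed.

Lemma pauli_sqr n (p : 'I_n -> 'I_4) : pauli p *m pauli p = 1%:M.
Proof. by rewrite pauliE tensor_mxM -tensor_mx1; apply: eq_tensor_mx => q; apply: pauli1_sqr. Qed.

Lemma pauli_adj n (p : 'I_n -> 'I_4) : adj (pauli p) = pauli p.
Proof. by rewrite pauliE tensor_mx_adj; apply: eq_tensor_mx => q; apply: pauli1_adj. Qed.

Lemma pauli_neq0 n (p : 'I_n -> 'I_4) r c :
  (pauli p r c != 0) = [forall q : 'I_n, bit q r (+) bit q c == flips (p q)].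
Proof.
rewrite mxE; apply/prodf_neq0/forallP => [nz q | flip_rc q _]; first by rewrite -pauli1_neq0 nz.
by rewrite pauli1_neq0 flip_rc.
Qed.

Lemma norm_pauli n (p : 'I_n -> 'I_4) r c : pauli p r c != 0 -> `|pauli p r c| = 1.
Proof.
rewrite pauli_neq0 => /forallP flip_rc; rewrite mxE normr_prod big1 // => q _.
by apply: norm_pauli1; rewrite pauli1_neq0 flip_rc.
Qed.

Lemma pauli_ket0 n (p : 'I_n -> 'I_4) (k : 'I_(2 ^ n)) :
  (forall q, p q != sY) -> (forall q, flips (p q) = bit q k) -> pauli p *m ket0 n = ket k.
Proof.
move=> noY flip_k; apply/matrixP => r c; rewrite (ord1 c) pauliE tensor_mx_ket0 ketE.
under eq_bigr do rewrite pauli1_ket0 // flip_k.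
by rewrite prodr_indicator eq_idx_bits.
Qed.

Lemma clifford1 n : clifford (1%:M : 'M[algC]_(2 ^ n)).
Proof.
split; first by rewrite /unitary adj_mx1 mul1mx.
by move=> c p c4; exists c, p; rewrite adj_mx1 mul1mx mulmx1.
Qed.

Lemma clifford_pauli n (a : 'I_n -> 'I_4) : clifford (pauli a).
Proof.
split; first by rewrite /unitary pauli_adj pauli_sqr.
move=> c p c4; have [e [e2 comm]] := pauli_comm a p.
exists (c * e), p; split; first exact: root4M c4 (root4_sqr1 e2).
rewrite pauli_adj -scalemxAr -scalemxAl comm -scalemxAl -mulmxA pauli_sqr mulmx1.
by rewrite scalerA.
Qed.

Definition isqrt2 : algC := (sqrtC 2)^-1.

Lemma isqrt2_real : isqrt2^* = isqrt2.
Proof. by rewrite /isqrt2 fmorphV /= geC0_conj // sqrtC_ge0 ler0n. Qed.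

Lemma isqrt2_sqr : isqrt2 * isqrt2 = 2^-1.
Proof. by rewrite /isqrt2 -invfM -expr2 sqrtCK. Qed.

Lemma clifford_pauli_sum n (pa pb : 'I_n -> 'I_4) (s : algC) :
  s ^+ 2 = 1 -> s^* = s -> pauli pa *m pauli pb = - (pauli pb *m pauli pa) ->
  clifford (isqrt2 *: (pauli pa + s *: pauli pb)).
Proof.
move=> s2 s_real anti; set A := pauli pa; set B := pauli pb; set U := isqrt2 *: _.
have sandwich (P : 'M_(2 ^ n)) eA eB :
    A *m P = eA *: (P *m A) -> B *m P = eB *: (P *m B) ->
    U *m P *m adj U = ((eA + eB) / 2) *: P + (s * (eA - eB) / 2) *: (P *m A *m B).
  move=> commA commB.
  have APA : A *m P *m A = eA *: P by rewrite commA -scalemxAl -mulmxA pauli_sqr mulmx1.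
  have BPB : B *m P *m B = eB *: P by rewrite commB -scalemxAl -mulmxA pauli_sqr mulmx1.
  have APB : A *m P *m B = eA *: (P *m A *m B) by rewrite commA -scalemxAl.
  have BPA : B *m P *m A = - (eB *: (P *m A *m B)).
    by rewrite commB -scalemxAl -mulmxA -[B *m A]opprK -anti mulmxN mulmxA scalerN.
  rewrite /U adj_scale adj_add adj_scale !pauli_adj s_real isqrt2_real.
  rewrite -scalemxAr -!scalemxAl scalerA isqrt2_sqr.
  rewrite !mulmxDl !mulmxDr -!scalemxAl -!scalemxAr APA BPB APB BPA.
  rewrite !scalerA -expr2 s2 mul1r scalerN !scalerDr !scalerA.
  rewrite scalerN scalerA -scaleNr [X in _ + X = _]addrC addrACA -!scalerDl.
  by congr (_ *: _ + _ *: _); ring.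
split.
  rewrite /unitary -{1}[U]mulmx1 (sandwich _ 1 1) ?mul1mx ?mulmx1 ?scale1r //.
  by rewrite subrr mulr0 mul0r scale0r addr0 mulrDl -splitr scale1r.
move=> c p c4; have [eA [eA2 commA]] := pauli_comm pa p.
have [eB [eB2 commB]] := pauli_comm pb p.
rewrite -scalemxAr -scalemxAl (sandwich _ _ _ commA commB).
have [->|->] : eB = eA \/ eB = - eA.
  by case: (sqr_eq1_cases eA2) (sqr_eq1_cases eB2) => -> [] ->; rewrite ?opprK; auto.
  exists (c * eA), p; split; first exact: root4M c4 (root4_sqr1 eA2).
  by rewrite subrr mulr0 mul0r scale0r addr0 mulrDl -splitr scalerA.
have [ph1 [q1 [ph1_4 ->]]] := pauli_mul p pa; have [ph2 [q2 [ph2_4 PB]]] := pauli_mul q1 pb.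
exists (c * (s * eA) * (ph1 * ph2)), q2; split.
  by rewrite !root4M // root4_sqr1.
rewrite addrN mul0r scale0r add0r opprK -scalemxAl PB !scalerA.
by rewrite mulrDr mulrDl -splitr !mulrA.
Qed.

(** * Diagonally dominant states are mixtures of stabilizer states *)

Definition stringX n (i : 'I_n) : 'I_n -> 'I_4 := fun q => if q == i then sX else sI.

Definition stringZX n (i j : 'I_n) : 'I_n -> 'I_4 :=
  fun q => if q == i then sZ else if q == j then sX else sI.

Lemma stringX_ZX_anticomm n (i j : 'I_n) : i != j ->
  pauli (stringX i) *m pauli (stringZX i j) = - (pauli (stringZX i j) *m pauli (stringX i)).
Proof.
move=> neq_ij; rewrite !pauliE !tensor_mxM -scaleN1r.
rewrite -(_ : \prod_(q < n) (if q == i then -1 else 1) = -1 :> algC); last first.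
  by rewrite (bigD1 i) //= eqxx big1 ?mulr1 // => q /negbTE ->.
rewrite -tensor_mxZ; apply: eq_tensor_mx => q r c; rewrite /stringX /stringZX.
by case: (q == i); [|case: (q == j)]; case: r; case: c; pauli1_simpl.
Qed.

Lemma stringX_ket0 n (i : 'I_n) : pauli (stringX i) *m ket0 n = ket_e i.
Proof. by apply: (pauli_ket0 (k := idx1 i)) => q; rewrite /stringX ?bit_idx1; case: (q == i). Qed.

Lemma stringZX_ket0 n (i j : 'I_n) : i != j -> pauli (stringZX i j) *m ket0 n = ket_e j.
Proof.
move=> neq_ij; apply: (pauli_ket0 (k := idx1 j)) => q; rewrite /stringZX ?bit_idx1.
  by case: (q == i) => //; case: (q == j).
by case: eqP => [->|_]; [rewrite (negbTE neq_ij)|case: (q == j)].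
Qed.

Lemma stab_state_pair n (a b : 'I_n) (s : algC) : a != b -> s ^+ 2 = 1 -> s^* = s ->
  stab_state (isqrt2 *: (pauli (stringX a) + s *: pauli (stringZX a b))) =
  2^-1 *: (ket_e a *m adj (ket_e a) + s *: (ket_e a *m adj (ket_e b)) +
           s *: (ket_e b *m adj (ket_e a)) + ket_e b *m adj (ket_e b)).
Proof.
move=> neq_ab s2 s_real; rewrite /stab_state.
have -> : isqrt2 *: (pauli (stringX a) + s *: pauli (stringZX a b)) *m ket0 n =
    isqrt2 *: (ket_e a + s *: ket_e b).
  by rewrite -scalemxAl mulmxDl -scalemxAl stringX_ket0 stringZX_ket0.
rewrite adj_scale adj_add adj_scale isqrt2_real s_real -scalemxAr -scalemxAl scalerA isqrt2_sqr.
rewrite mulmxDl !mulmxDr -!scalemxAl -!scalemxAr scalerA -expr2 s2 scale1r !addrA.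
by congr (_ *: (_ + _ + _ + _)); rewrite addrC.
Qed.

Definition sgn (x : algC) : algC := if 0 <= x then 1 else -1.

Lemma normr_sgn x : x \is Num.real -> `|x| * sgn x = x.
Proof.
rewrite /sgn => x_real; have [x_ge0|x_lt0] := boolP (0 <= x); first by rewrite ger0_norm ?mulr1.
by rewrite ltr0_norm ?mulrN1 ?opprK // real_ltNge ?real0.
Qed.

Lemma sgn_sqr x : sgn x ^+ 2 = 1.
Proof. by rewrite /sgn; case: (0 <= x); rewrite ?sqrrN expr1n. Qed.

Lemma sgn_mul x : x \is Num.real -> sgn x * x = `|x|.
Proof. by move/normr_sgn=> {2}<-; rewrite mulrCA -expr2 sgn_sqr mulr1. Qed.

Lemma sgn_real x : (sgn x)^* = sgn x.
Proof. by rewrite /sgn; case: (0 <= x); rewrite ?rmorphN rmorph1. Qed.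

Lemma sumr_offdiag_swap (V : nmodType) n (F : 'I_n -> 'I_n -> V) :
  \sum_a \sum_(b | b != a) F a b = \sum_a \sum_(b | b != a) F b a.
Proof.
rewrite (exchange_big_dep predT) //=; apply: eq_bigr => a _.
by apply: eq_bigl => b; rewrite eq_sym.
Qed.

Lemma diag_dominant_split (R : numFieldType) (V : lmodType R) n
    (E : 'I_n -> 'I_n -> V) (B : 'M[R]_n) (s : 'I_n -> 'I_n -> R) :
  B^T = B -> (forall a b, `|B a b| * s a b = B a b) ->
  \sum_a (B a a - \sum_(b | b != a) `|B a b|) *: E a a +
  \sum_a \sum_(b | b != a) `|B a b| *: (2^-1 *: (E a a + s a b *: E a b + s a b *: E b a + E b b))
  = \sum_a \sum_b B a b *: E a b.
Proof.
move=> B_sym normB_s; have Bsym a b : B b a = B a b by rewrite -[in LHS]B_sym mxE.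
have halves (c : R) (x : V) : (c / 2) *: x + (c / 2) *: x = c *: x by rewrite -scalerDl -splitr.
have diag : \sum_a \sum_(b | b != a) ((`|B a b| / 2) *: E a a + (`|B a b| / 2) *: E b b) =
    \sum_a (\sum_(b | b != a) `|B a b|) *: E a a.
  under eq_bigr do rewrite big_split /=.
  rewrite big_split /= (sumr_offdiag_swap (fun a b => (`|B a b| / 2) *: E b b)) -big_split /=.
  apply: eq_bigr => a _; rewrite -big_split scaler_suml; apply: eq_bigr => b _ /=.
  by rewrite Bsym halves.
have offdiag : \sum_a \sum_(b | b != a) ((B a b / 2) *: E a b + (B a b / 2) *: E b a) =
    \sum_a \sum_(b | b != a) B a b *: E a b.
  under eq_bigr do rewrite big_split /=.
  rewrite big_split /= (sumr_offdiag_swap (fun a b => (B a b / 2) *: E b a)) -big_split /=.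
  by apply: eq_bigr => a _; rewrite -big_split; apply: eq_bigr => b _ /=; rewrite Bsym halves.
have pair a b : `|B a b| *: (2^-1 *: (E a a + s a b *: E a b + s a b *: E b a + E b b)) =
    ((`|B a b| / 2) *: E a a + (`|B a b| / 2) *: E b b) +
    ((B a b / 2) *: E a b + (B a b / 2) *: E b a).
  set x := `|B a b|; rewrite -normB_s -/x scalerA !scalerDr !scalerA -!addrA.
  by congr (_ + _); rewrite [RHS]addrC -!addrA (mulrAC x (s a b)).
have pairs : \sum_a \sum_(b | b != a)
      `|B a b| *: (2^-1 *: (E a a + s a b *: E a b + s a b *: E b a + E b b)) =
    \sum_a (\sum_(b | b != a) `|B a b|) *: E a a + \sum_a \sum_(b | b != a) B a b *: E a b.
  by under eq_bigr do under eq_bigr do rewrite pair; under eq_bigr do rewrite big_split;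
    rewrite big_split /= diag offdiag.
rewrite pairs addrA -!big_split /=; apply: eq_bigr => a _.
by rewrite -scalerDl subrK [RHS](bigD1 a).
Qed.

Lemma in_stab_polytope_fin n (T : finType) (w : T -> algC) (C : T -> 'M[algC]_(2 ^ n)) :
  (forall t, 0 <= w t) -> \sum_t w t = 1 -> (forall t, clifford (C t)) ->
  in_stab_polytope (\sum_t w t *: stab_state (C t)).
Proof.
move=> w_ge0 w_sum1 C_cliff; exists #|T|, (w \o enum_val), (C \o enum_val).
have reindex (V : nmodType) (F : T -> V) : \sum_t F t = \sum_(k < #|T|) F (enum_val k).
  by rewrite -(big_enum_val (A := T)); apply: eq_bigl.
split; [|split; [|split]] => [k||k|] /=.
- exact: w_ge0.
- by rewrite -reindex.
- exact: C_cliff.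
- exact: reindex.
Qed.

Lemma stab_state1 n : stab_state (1%:M : 'M[algC]_(2 ^ n)) = ket0 n *m adj (ket0 n).
Proof. by rewrite /stab_state mul1mx. Qed.

Lemma diag_dominant_in_stab_polytope n (p0 : algC) (B : 'M[algC]_n) :
  (forall i j, B i j \is Num.real) -> B^T = B -> 0 <= p0 -> p0 + \tr B = 1 ->
  (forall i, \sum_(j | j != i) `|B i j| <= B i i) -> in_stab_polytope (rho_of p0 B).
Proof.
move=> B_real B_sym p0_ge0 trace1 dd.
pose wp (a b : 'I_n) := if b != a then `|B a b| else 0.
pose Cp (a b : 'I_n) := if b != a
  then isqrt2 *: (pauli (stringX a) + sgn (B a b) *: pauli (stringZX a b)) else 1%:M.
pose w (t : 'I_1 + 'I_n + 'I_n * 'I_n) : algC := match t with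
  | inl (inl _) => p0
  | inl (inr a) => B a a - \sum_(b | b != a) `|B a b|
  | inr p => wp p.1 p.2 end.
pose C (t : 'I_1 + 'I_n + 'I_n * 'I_n) : 'M[algC]_(2 ^ n) := match t with
  | inl (inl _) => 1%:M
  | inl (inr a) => pauli (stringX a)
  | inr p => Cp p.1 p.2 end.
have -> : rho_of p0 B = \sum_t w t *: stab_state (C t).
  rewrite !big_sumType big_ord1 /= stab_state1.
  rewrite -(pair_bigA _ (fun a b => wp a b *: stab_state (Cp a b))) -addrA; congr (_ + _).
  rewrite -(diag_dominant_split (fun a b => ket_e a *m adj (ket_e b))
    (s := fun a b => sgn (B a b))) // => [|a b]; last by rewrite normr_sgn.
  congr (_ + _); first by apply: eq_bigr => a _; rewrite /stab_state stringX_ket0.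
  apply: eq_bigr => a _; rewrite big_mkcond; apply: eq_bigr => b _ /=.
  rewrite /wp /Cp; case: ifP => [neq_ba|_]; last by rewrite scale0r.
  by rewrite stab_state_pair 1?eq_sym ?sgn_sqr ?sgn_real.
apply: in_stab_polytope_fin => [[[?|a]|[a b]]||[[?|a]|[a b]]]; rewrite /= ?/wp ?/Cp.
- exact: p0_ge0.
- by rewrite subr_ge0.
- by case: ifP.
- rewrite !big_sumType big_ord1 /= -(pair_bigA _ wp) -addrA -big_split /= -trace1.
  congr (_ + _); apply: eq_bigr => a _.
  by rewrite /wp -big_mkcond subrK.
- exact: clifford1.
- exact: clifford_pauli.
- case: ifP => neq_ba; last exact: clifford1.
  by apply: clifford_pauli_sum; rewrite ?sgn_sqr ?sgn_real ?stringX_ZX_anticomm 1?eq_sym.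
Qed.

(** * Amplitudes of stabilizer states *)

Definition stringZ n (S : 'I_n -> bool) : 'I_n -> 'I_4 := fun q => if S q then sZ else sI.

Lemma stringZ_ket0 n (S : 'I_n -> bool) : pauli (stringZ S) *m ket0 n = ket0 n.
Proof. by apply: (pauli_ket0 (k := idx0 n)) => q; rewrite /stringZ ?bit_idx0; case: (S q). Qed.

Lemma ket0_outer_stringZ n : ket0 n *m adj (ket0 n) =
  (2 ^ n)%:R^-1 *: \sum_(S : {ffun 'I_n -> bool}) pauli (stringZ S).
Proof.
apply/matrixP => r c; rewrite outer_mxE !ketE conjC_nat mxE summxE.
under eq_bigr do rewrite pauliE mxE.
rewrite -(bigA_distr_bigA (fun (q : 'I_n) (b : bool) =>
  pauli1 (if b then sZ else sI) (bit q r) (bit q c))).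
have IplusZ q : \sum_(b : bool) pauli1 (if b then sZ else sI) (bit q r) (bit q c) =
    2 * (~~ bit q r && ~~ bit q c)%:R.
  by rewrite big_bool /=; case: (bit q r); case: (bit q c);
    rewrite /pauli1 /= ?addr0 ?mulr0 ?mulr1 ?addNr.
under eq_bigr do rewrite IplusZ.
rewrite big_split /= prodr_const card_ord prodr_indicator natrX mulrA mulVf ?mul1r; last first.
  by rewrite expf_neq0 // pnatr_eq0.
rewrite !eq_idx0_bits -natrM mulnb; congr (nat_of_bool _)%:R.
apply/andP/forallP => [[/forallP nr /forallP nc] q | nrc]; first by rewrite nr nc.
by split; apply/forallP => q; case/andP: (nrc q).
Qed.

Lemma pauli_row_support n (p : 'I_n -> 'I_4) (z w t : 'I_(2 ^ n)) :
  pauli p z w != 0 -> t != w -> pauli p z t = 0.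
Proof.
rewrite pauli_neq0 => /forallP flip_zw; apply: contraNeq; rewrite pauli_neq0 => /forallP flip_zt.
rewrite eq_idx_bits; apply/forallP => q.
by move: (flip_zw q) (flip_zt q) => /eqP <-; case: (bit q z); case: (bit q t); case: (bit q w).
Qed.

Lemma norm_fixed_by_pauli n (v : 'cV[algC]_(2 ^ n)) (c : algC) (p : 'I_n -> 'I_4) z w :
  c ^+ 4 = 1 -> (c *: pauli p) *m v = v -> pauli p z w != 0 -> `|v z 0| = `|v w 0|.
Proof.
move=> c4 fix_v Pzw; rewrite -{1}fix_v -scalemxAl mxE mxE (bigD1 w) //= big1 ?addr0.
  by rewrite !normrM (root4_norm c4) (norm_pauli Pzw) !mul1r.
by move=> t ntw; rewrite (pauli_row_support Pzw ntw) mul0r.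
Qed.

Lemma stab_state_stabilizer n (C : 'M[algC]_(2 ^ n)) (x y : 'I_(2 ^ n)) : clifford C ->
  (C *m ket0 n) x 0 != 0 -> (C *m ket0 n) y 0 != 0 ->
  exists (c : algC) (p : 'I_n -> 'I_4),
    [/\ c ^+ 4 = 1, (c *: pauli p) *m (C *m ket0 n) = C *m ket0 n & pauli p x y != 0].
Proof.
move=> [unitC normalC] psi_x psi_y; set psi := C *m ket0 n.
have psi_outer : psi *m adj psi =
    (2 ^ n)%:R^-1 *: \sum_(S : {ffun 'I_n -> bool}) (C *m pauli (stringZ S) *m adj C).
  rewrite /psi adj_mulmx mulmxA -[C *m ket0 n *m _]mulmxA ket0_outer_stringZ.
  by rewrite -scalemxAr -scalemxAl mulmx_sumr mulmx_suml.
have [S CSxy] : exists S : {ffun 'I_n -> bool}, (C *m pauli (stringZ S) *m adj C) x y != 0.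
  have psi_xy : psi x 0 * (psi y 0)^* != 0 by rewrite mulf_neq0 ?conjC_eq0.
  apply/existsP; apply: contraLR psi_xy.
  rewrite negb_exists -outer_mxE psi_outer mxE summxE => /forallP CS0.
  by rewrite big1 ?mulr0 ?eqxx // => S _; apply/eqP; apply: negbNE (CS0 S).
have [c [p [c4 CSC]]] := normalC 1 (stringZ S) (expr1n _ _); rewrite scale1r in CSC.
exists c, p; split => //.
  have CdC : adj C *m C = 1%:M by apply: mulmx1C.
  by rewrite -CSC /psi -!mulmxA (mulmxA (adj C)) CdC mul1mx stringZ_ket0.
by move: CSxy; rewrite CSC mxE mulf_eq0 negb_or => /andP[].
Qed.

Lemma stab_amplitude_norm n (C : 'M[algC]_(2 ^ n)) (x y z w : 'I_(2 ^ n)) : clifford C ->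
  (C *m ket0 n) x 0 != 0 -> (C *m ket0 n) y 0 != 0 ->
  (forall q : 'I_n, bit q w = bit q z (+) bit q x (+) bit q y) ->
  `|(C *m ket0 n) z 0| = `|(C *m ket0 n) w 0|.
Proof.
move=> C_cliff psi_x psi_y bits_w.
have [c [p [c4 fix_psi]]] := stab_state_stabilizer C_cliff psi_x psi_y.
rewrite !pauli_neq0 => /forallP flip_xy; apply: norm_fixed_by_pauli c4 fix_psi _.
rewrite pauli_neq0; apply/forallP => q; rewrite bits_w -(eqP (flip_xy q)).
by case: (bit q z); case: (bit q x); case: (bit q y).
Qed.

(** * A witness functional separating the stabilizer polytope *)

Definition witness n (i : 'I_n) (s : 'I_n -> algC) (M : 'M[algC]_(2 ^ n)) : algC :=
  M (idx1 i) (idx1 i)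
  - \sum_(j | j != i) (s j / 2) * (M (idx1 i) (idx1 j) + M (idx1 j) (idx1 i))
  + \sum_(j | j != i) \sum_(k | (k != i) && (k != j)) M (idx3 i j k) (idx3 i j k) / 2.

Lemma witness_sum n (i : 'I_n) s m (w : 'I_m -> algC) (F : 'I_m -> 'M[algC]_(2 ^ n)) :
  witness i s (\sum_k w k *: F k) = \sum_k w k * witness i s (F k).
Proof.
have entry a b : (\sum_k w k *: F k) a b = \sum_k w k * F k a b.
  by rewrite summxE; apply: eq_bigr => k _; rewrite mxE.
rewrite /witness entry.
under [X in _ - X + _ = _]eq_bigr do rewrite !entry -big_split mulr_sumr /=.
under [X in _ + X = _]eq_bigr do under eq_bigr do rewrite entry mulr_suml.
under [RHS]eq_bigr do rewrite mulrDr mulrBr.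
rewrite big_split sumrB /=; congr (_ - _ + _).
  rewrite exchange_big /=; apply: eq_bigr => k _; rewrite mulr_sumr.
  by apply: eq_bigr => j _; rewrite -mulrDr mulrCA.
under eq_bigr do rewrite exchange_big /=.
rewrite exchange_big /=; apply: eq_bigr => k _; rewrite mulr_sumr.
by apply: eq_bigr => j _; rewrite mulr_sumr; apply: eq_bigr => l _; rewrite mulrA.
Qed.

Lemma sgn_re_le_norm (s z : algC) : s = 1 \/ s = -1 -> s / 2 * (z + z^*) <= `|z|.
Proof.
have re_le (x : algC) : (x + x^*) / 2 <= `|x| by rewrite -ReE; exact: (leif_Re_Creal x).1.
case=> ->; first by rewrite mul1r mulrC re_le.
rewrite -normrN (_ : -1 / 2 * (z + z^*) = (- z + (- z)^*) / 2) ?re_le //.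
by rewrite rmorphN; ring.
Qed.

Lemma indicator_pairs_ge0 (R : numFieldType) (I : finType) (P : pred I) (u : I -> bool) (N : R) :
  0 <= N -> 0 <= N - \sum_(j | P j) N * (u j)%:R
    + \sum_(j | P j) \sum_(k | P k && (k != j)) N * ((u j)%:R * (u k)%:R) / 2.
Proof.
move=> N_ge0; set m := \sum_(j | P j) ((u j)%:R : R).
have pairs j : P j -> \sum_(k | P k && (k != j)) N * ((u j)%:R * (u k)%:R) / 2 =
    N / 2 * ((u j)%:R * m - (u j)%:R).
  move=> Pj; have idem : ((u j)%:R : R) * (u j)%:R = (u j)%:R by case: (u j); rewrite ?mulr1 ?mulr0.
  rewrite /m [in RHS](bigD1 j) //= [(u j)%:R * _]mulrDr idem addrAC subrr add0r.
  rewrite mulr_sumr mulr_sumr.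
  by apply: eq_bigr => k _; rewrite mulrAC mulrA.
rewrite (eq_bigr _ pairs) -!mulr_sumr sumrB -mulr_suml -/m.
have -> : N - N * m + N / 2 * (m * m - m) = N * ((m - 1) * (m - 2) / 2).
  by field.
rewrite mulr_ge0 // mulr_ge0 ?invr_ge0 ?ler0n //.
rewrite /m -natr_sum; case: (\sum_(j | P j) _)%N => [|[|k]].
- by rewrite !sub0r mulNr mul1r opprK ler0n.
- by rewrite subrr mul0r.
by rewrite mulr_ge0 // subr_ge0 ?ler1n ?ler_nat.
Qed.

Section WitnessOnStabilizerStates.
Variables (n : nat) (C : 'M[algC]_(2 ^ n)) (i : 'I_n).
Hypothesis C_cliff : clifford C.

Local Notation psi k := ((C *m ket0 n) k 0).
Local Notation N := (`|psi (idx1 i)| ^+ 2).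

Lemma stab_stateE a b : stab_state C a b = psi a * (psi b)^*.
Proof. exact: outer_mxE. Qed.

Lemma witness_cross_le (s : algC) j : s = 1 \/ s = -1 -> j != i ->
  s / 2 * (stab_state C (idx1 i) (idx1 j) + stab_state C (idx1 j) (idx1 i))
    <= N * (psi (idx1 j) != 0)%:R.
Proof.
move=> s_pm ji; rewrite !stab_stateE.
have -> : psi (idx1 j) * (psi (idx1 i))^* = (psi (idx1 i) * (psi (idx1 j))^*)^*.
  by rewrite rmorphM /= conjCK mulrC.
have [-> | psi_j] := eqVneq (psi (idx1 j)) 0.
  by rewrite conjC0 mulr0 conjC0 addr0 !mulr0.
have [-> | psi_i] := eqVneq (psi (idx1 i)) 0.
  by rewrite mul0r conjC0 addr0 mulr0 normr0 expr0n mul0r.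
rewrite /= mulr1 (le_trans (sgn_re_le_norm _ s_pm)) // normrM norm_conjC expr2.
rewrite (@stab_amplitude_norm _ _ (idx1 i) (idx1 j) (idx1 j) (idx1 i)) // => q.
by rewrite !bit_idx1; case: (q == i); case: (q == j).
Qed.

Lemma witness_triple_ge j k : j != i -> k != i -> k != j ->
  N * ((psi (idx1 j) != 0)%:R * (psi (idx1 k) != 0)%:R)
    <= stab_state C (idx3 i j k) (idx3 i j k).
Proof.
move=> ji ki kj; rewrite stab_stateE -normCK.
have [_ | psi_j] := eqVneq (psi (idx1 j)) 0; first by rewrite /= mul0r mulr0 exprn_ge0.
have [_ | psi_k] := eqVneq (psi (idx1 k)) 0; first by rewrite /= !mulr0 exprn_ge0.
rewrite /= !mulr1 (@stab_amplitude_norm _ _ (idx1 j) (idx1 k) (idx1 i) (idx3 i j k)) //.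
move=> q; rewrite bit_idx3 !bit_idx1.
have [-> | _] := eqVneq q i; first by rewrite [i == j]eq_sym [i == k]eq_sym (negbTE ji) (negbTE ki).
have [-> | _] := eqVneq q j; first by rewrite [j == k]eq_sym (negbTE kj).
by case: (q == k).
Qed.

Lemma witness_stab_ge0 (s : 'I_n -> algC) :
  (forall j, s j = 1 \/ s j = -1) -> 0 <= witness i s (stab_state C).
Proof.
move=> s_pm; apply: le_trans (indicator_pairs_ge0 (fun j => j != i)
  (fun j => psi (idx1 j) != 0) (exprn_ge0 2 (normr_ge0 (psi (idx1 i))))) _.
rewrite /witness; apply: lerD; last first.
  apply: ler_sum => j ji; apply: ler_sum => k /andP[ki kj].
  by rewrite ler_pM2r ?invr_gt0 ?ltr0n // witness_triple_ge.
apply: lerB; first by rewrite stab_stateE -normCK.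
by apply: ler_sum => j ji; apply: witness_cross_le.
Qed.

End WitnessOnStabilizerStates.

Lemma rho_ofE n p0 (B : 'M[algC]_n) r c :
  rho_of p0 B r c = p0 * ((r == idx0 n) && (c == idx0 n))%:R +
    \sum_a \sum_b B a b * ((r == idx1 a) && (c == idx1 b))%:R.
Proof.
have outer_ket (k l : 'I_(2 ^ n)) : (ket k *m adj (ket l)) r c = ((r == k) && (c == l))%:R.
  by rewrite outer_mxE !ketE conjC_nat -natrM mulnb.
rewrite /rho_of mxE [in X in X + _]mxE outer_ket summxE; congr (_ + _).
by apply: eq_bigr => a _; rewrite summxE; apply: eq_bigr => b _; rewrite mxE outer_ket.
Qed.

Lemma rho_of_idx0 n p0 (B : 'M[algC]_n) : rho_of p0 B (idx0 n) (idx0 n) = p0.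
Proof.
rewrite rho_ofE eqxx mulr1 big1 ?addr0 // => a _.
by rewrite big1 // => b _; rewrite eq_sym idx1_neq0 mulr0.
Qed.

Lemma rho_of_idx1 n p0 (B : 'M[algC]_n) (c d : 'I_n) : rho_of p0 B (idx1 c) (idx1 d) = B c d.
Proof.
rewrite rho_ofE idx1_neq0 mulr0 add0r (bigD1 c) //= [X in _ + X]big1 ?addr0 => [|a ac]; last first.
  by rewrite big1 // => b _; rewrite idx1_eq eq_sym (negbTE ac) mulr0.
rewrite (bigD1 d) //= [X in _ + X]big1 ?addr0 => [|b bd]; first by rewrite !idx1_eq !eqxx mulr1.
by rewrite !idx1_eq eqxx eq_sym (negbTE bd) mulr0.
Qed.

Lemma rho_of_idx3 n p0 (B : 'M[algC]_n) (i j k : 'I_n) : j != i -> k != i -> k != j ->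
  rho_of p0 B (idx3 i j k) (idx3 i j k) = 0.
Proof.
move=> ji ki kj; have bit_i := bit_idx3 i j k i; have bit_j := bit_idx3 i j k j.
have not0 : (idx3 i j k == idx0 n) = false.
  by apply/negbTE; rewrite eq_idx0_bits negb_forall; apply/existsP; exists i; rewrite bit_i eqxx.
have not1 a : (idx3 i j k == idx1 a) = false.
  apply/negbTE/negP => /eqP e3; have [ai | ai] := eqVneq a i.
    by move: bit_j; rewrite e3 bit_idx1 ai (negbTE ji) eqxx orbT.
  by move: bit_i; rewrite e3 bit_idx1 eq_sym (negbTE ai) eqxx.
rewrite rho_ofE not0 mulr0 add0r big1 // => a _.
by rewrite big1 // => b _; rewrite not1 mulr0.
Qed.

Lemma witness_rho n p0 (B : 'M[algC]_n) (i : 'I_n) :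
  (forall a b, B a b \is Num.real) -> B^T = B ->
  witness i (fun j => sgn (B i j)) (rho_of p0 B) = B i i - \sum_(j | j != i) `|B i j|.
Proof.
move=> B_real B_sym; have Bsym a b : B b a = B a b by rewrite -[in LHS]B_sym mxE.
rewrite /witness rho_of_idx1 [X in _ - _ + X]big1 ?addr0 => [|j ji]; last first.
  by rewrite big1 // => k /andP[ki kj]; rewrite rho_of_idx3 // mul0r.
congr (_ - _); apply: eq_bigr => j _; rewrite !rho_of_idx1 [B j i]Bsym.
by rewrite -(sgn_mul (B_real i j)); field.
Qed.

Lemma stab_polytope_diag_dominant n p0 (B : 'M[algC]_n) :
  (forall a b, B a b \is Num.real) -> B^T = B ->
  in_stab_polytope (rho_of p0 B) -> forall i, \sum_(j | j != i) `|B i j| <= B i i.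
Proof.
move=> B_real B_sym [m [w [C [w_ge0 [_ [C_cliff rho_eq]]]]]] i.
rewrite -subr_ge0 -(witness_rho p0 i B_real B_sym) rho_eq witness_sum.
apply: sumr_ge0 => k _; rewrite mulr_ge0 // witness_stab_ge0 // => j.
by rewrite /sgn; case: ifP; [left | right].
Qed.

Unset Implicit Arguments.

Theorem lemmaS1 (n : nat) (p0 : algC) (B : 'M[algC]_n) :
  (2 <= n)%N ->
  (forall i j, B i j \is Num.real) ->
  B^T = B ->
  psd B ->
  p0 + \tr B = 1 ->
  density (rho_of p0 B) ->
  (in_stab_polytope (rho_of p0 B) <->
   forall i : 'I_n, \sum_(j < n | j != i) `|B i j| <= B i i).
Proof.
move=> _ B_real B_sym _ trace1 [[_ rho_psd] _]; split.
  exact: stab_polytope_diag_dominant.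
apply: diag_dominant_in_stab_polytope => //.
by rewrite -(rho_of_idx0 p0 B) -quad_form_ket; apply: rho_psd.
Qed.
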